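(* Let $AB\Gamma$ be a (nondegenerate) triangle with interior angles $A$, $B$, $\Gamma$ at the vertices $A$, $B$, $\Gamma$ respectively. Let $\ell_1$ be the line perpendicular to $AB$ through $B$, $\ell_2$ the line perpendicular to $B\Gamma$ through $\Gamma$, and $\ell_3$ the line perpendicular to $\Gamma A$ through $A$. These three lines bound a triangle $A'B'\Gamma'$. If $E$ and $E'$ denote the areas of triangles $AB\Gamma$ and $A'B'\Gamma'$ respectively, then $$\frac{E'}{E} = (\cot A + \cot B + \cot \Gamma)^2 .$$ *)

From Stdlib Require Import Reals.
Open Scope R_scope.

Definition pt := (R * R)%type.

Definition vsub (P Q : pt) : pt := (fst P - fst Q, snd P - snd Q).
Definition dot (u v : pt) : R := fst u * fst v + snd u * snd v.
Definition cross (u v : pt) : R := fst u * snd v - snd u * fst v.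
Definition vnorm (u : pt) : R := sqrt (dot u u).

Definition nondegenerate (A B C : pt) : Prop := cross (vsub B A) (vsub C A) <> 0.

Definition tri_area (P Q S : pt) : R := Rabs (cross (vsub Q P) (vsub S P)) / 2.

Definition angle_at (P Q S : pt) : R :=
  acos (dot (vsub Q P) (vsub S P) / (vnorm (vsub Q P) * vnorm (vsub S P))).

Definition cot (x : R) : R := cos x / sin x.

Definition on_perp (P Q X : pt) : Prop := dot (vsub X Q) (vsub Q P) = 0.

(* Both the cotangent sum and the area of the outer triangle are rational in the
   coordinates.  With D = cross (B - A) (Γ - A) (twice the signed area of ABΓ) and
   S the sum of the three dot products of the sides at the vertices, the cotangent
   at a vertex is its dot product divided by |D|, and the three pairwise
   intersections of the perpendiculars, computed by Cramer's rule, span a triangle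
   of signed double area S^2 / D.  Hence E'/E = S^2 / D^2 = (S / |D|)^2. *)

From Stdlib Require Import Reals Lra Psatz.
Open Scope R_scope.

Lemma dot_cross_sq (u v : pt) :
  dot u v ^ 2 + cross u v ^ 2 = dot u u * dot v v.
Proof. destruct u, v; unfold dot, cross; simpl; ring. Qed.

Lemma dot_self_pos (u v : pt) : cross u v <> 0 -> 0 < dot u u.
Proof.
  destruct u as [ux uy], v as [vx vy]; unfold dot, cross; simpl; intro Hc.
  destruct (Rle_lt_dec (ux * ux + uy * uy) 0) as [Hle|Hlt]; [|exact Hlt].
  assert (ux = 0) by nra; assert (uy = 0) by nra; subst.
  contradict Hc; ring.
Qed.

Lemma cot_acos_dot_div_norms (u v : pt) : cross u v <> 0 ->
  cot (acos (dot u v / (vnorm u * vnorm v))) = dot u v / Rabs (cross u v).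
Proof.
  intro Hc.
  assert (Hv : cross v u <> 0) by (contradict Hc; destruct u, v;
    unfold cross in *; simpl in *; lra).
  pose proof (dot_self_pos u v Hc) as Hu2; pose proof (dot_self_pos v u Hv) as Hv2.
  set (n := vnorm u * vnorm v).
  assert (Hn2 : n * n = dot u u * dot v v).
  { unfold n, vnorm; rewrite <- (sqrt_mult (dot u u) (dot v v)) by lra.
    apply sqrt_sqrt; nra. }
  assert (Hn : 0 < n) by (unfold n, vnorm; apply Rmult_lt_0_compat; apply sqrt_lt_R0; lra).
  assert (Habs : 0 < Rabs (cross u v)) by (apply Rabs_pos_lt; exact Hc).
  pose proof (dot_cross_sq u v) as Hlag.
  assert (Hsin : 1 - (dot u v / n)² = (Rabs (cross u v) / n) ^ 2).
  { replace ((Rabs (cross u v) / n) ^ 2) with (Rabs (cross u v) ^ 2 / (n * n))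
      by (field; lra).
    rewrite pow2_abs; replace (cross u v ^ 2) with (n * n - dot u v ^ 2) by lra.
    unfold Rsqr; field; lra. }
  assert (Hx : -1 <= dot u v / n <= 1).
  { assert (0 <= (Rabs (cross u v) / n) ^ 2) by apply pow2_ge_0.
    unfold Rsqr in Hsin; nra. }
  unfold cot; rewrite cos_acos, sin_acos, Hsin, sqrt_pow2 by
    (try exact Hx; apply Rlt_le, Rdiv_lt_0_compat; lra).
  field; lra.
Qed.

Lemma cross_vsub_rotate (P Q S : pt) :
  cross (vsub S Q) (vsub P Q) = cross (vsub Q P) (vsub S P).
Proof. destruct P, Q, S; unfold cross, vsub; simpl; ring. Qed.

Lemma cross_vsub_shift (P Q S : pt) :
  cross (vsub Q P) (vsub S Q) = cross (vsub Q P) (vsub S P).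
Proof. destruct P, Q, S; unfold cross, vsub; simpl; ring. Qed.

Lemma cot_angle_at (P Q S : pt) : nondegenerate P Q S ->
  cot (angle_at P Q S) = dot (vsub Q P) (vsub S P) / Rabs (cross (vsub Q P) (vsub S P)).
Proof. exact (cot_acos_dot_div_norms (vsub Q P) (vsub S P)). Qed.

Lemma nondegenerate_rotate (P Q S : pt) : nondegenerate P Q S -> nondegenerate Q S P.
Proof. unfold nondegenerate; intro H; rewrite cross_vsub_rotate; exact H. Qed.

(* The intersection of the perpendicular to PQ through Q with the perpendicular
   to RS through S, by Cramer's rule. *)
Definition perp_meet (P Q R S : pt) : pt :=
  let u := vsub Q P in let v := vsub S R in
  let a := dot Q u in let b := dot S v in
  ((a * snd v - b * snd u) / cross u v, (fst u * b - fst v * a) / cross u v).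

Lemma on_perp_meet (P Q R S X : pt) :
  cross (vsub Q P) (vsub S R) <> 0 ->
  on_perp P Q X -> on_perp R S X -> X = perp_meet P Q R S.
Proof.
  destruct P as [p1 p2], Q as [q1 q2], R as [r1 r2], S as [s1 s2], X as [x1 x2].
  unfold perp_meet, on_perp, cross, dot, vsub; simpl; intros Hc H1 H2.
  pose proof (f_equal (Rmult (s1 - r1)) H1); pose proof (f_equal (Rmult (s2 - r2)) H1).
  pose proof (f_equal (Rmult (q1 - p1)) H2); pose proof (f_equal (Rmult (q2 - p2)) H2).
  f_equal; field_simplify_eq; auto; lra.
Qed.

Definition vertex_dot_sum (A B G : pt) : R :=
  dot (vsub B A) (vsub G A) + dot (vsub G B) (vsub A B) + dot (vsub A G) (vsub B G).

Lemma perp_triangle_cross (A B G : pt) : nondegenerate A B G ->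
  let A' := perp_meet G A A B in
  let B' := perp_meet A B B G in
  let G' := perp_meet B G G A in
  cross (vsub B' A') (vsub G' A')
  = vertex_dot_sum A B G ^ 2 / cross (vsub B A) (vsub G A).
Proof.
  destruct A, B, G; unfold nondegenerate, vertex_dot_sum, perp_meet, cross, dot, vsub;
    simpl; intro HD.
  field; repeat split; contradict HD; lra.
Qed.

Lemma area_ratio_sq (S D : R) : D <> 0 ->
  Rabs (S ^ 2 / D) / 2 / (Rabs D / 2) = (S / Rabs D) ^ 2.
Proof.
  intro HD; pose proof (Rabs_pos_lt D HD).
  assert (Rabs (S ^ 2 / D) = S ^ 2 / Rabs D) as ->.
  { unfold Rdiv; rewrite Rabs_mult, Rabs_inv, Rabs_pos_eq by apply pow2_ge_0.
    reflexivity. }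
  field; lra.
Qed.

Theorem mainTheorem1 (A B G A' B' G' : pt) :
  nondegenerate A B G ->
  on_perp G A A' -> on_perp A B A' ->
  on_perp A B B' -> on_perp B G B' ->
  on_perp B G G' -> on_perp G A G' ->
  tri_area A' B' G' / tri_area A B G =
    (cot (angle_at A B G) + cot (angle_at B G A) + cot (angle_at G A B)) ^ 2.
Proof.
  intros HD HA3 HA1 HB1 HB2 HG2 HG3.
  pose proof (nondegenerate_rotate _ _ _ HD) as HD'.
  pose proof (nondegenerate_rotate _ _ _ HD') as HD''.
  assert (HAB : cross (vsub A G) (vsub B A) <> 0) by now rewrite cross_vsub_shift.
  assert (HBG : cross (vsub B A) (vsub G B) <> 0) by now rewrite cross_vsub_shift.
  assert (HGA : cross (vsub G B) (vsub A G) <> 0) by now rewrite cross_vsub_shift.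
  rewrite (on_perp_meet _ _ _ _ A' HAB HA3 HA1), (on_perp_meet _ _ _ _ B' HBG HB1 HB2),
    (on_perp_meet _ _ _ _ G' HGA HG2 HG3).
  unfold tri_area; rewrite (perp_triangle_cross _ _ _ HD).
  rewrite (cot_angle_at _ _ _ HD), (cot_angle_at _ _ _ HD'), (cot_angle_at _ _ _ HD'').
  rewrite (cross_vsub_rotate B G A), (cross_vsub_rotate A B G), area_ratio_sq by exact HD.
  unfold vertex_dot_sum; f_equal; field; now apply Rabs_no_R0.
Qed.
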